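(* Let $(X,d)$ be a compact metric space, $f_{1,\infty}=(f_n)_{n=1}^\infty$ a sequence of continuous maps $f_n:X\to X$, and $(p_k)_{k=1}^\infty$ a sequence of positive integers. Let $(A_i)_{i=0}^\infty$ and $(B_i)_{i=0}^\infty$ be decreasing sequences of compact subsets of $X$ with $\bigcap_{i=0}^\infty A_i=\{a\}$ and $\bigcap_{i=0}^\infty B_i=\{b\}$, where $a\neq b$. Suppose that for every choice $c=(C_k)_k$ with $C_k\in\{A_k,B_k\}$ for each $k$, there exists $x_c\in X$ such that $f_1^{p_k}(x_c)\in C_k$ for all $k\ge 1$. Then $f_{1,\infty}$ is uniformly distributively chaotic in the sequence $(p_k)$.
   Context: For $n\in\mathbb{N}$, $f_1^n=f_n\circ\cdots\circ f_1$. For $x,y\in X$ and $t>0$ let $\Phi(f_{1,\infty},x,y,t,p_k)=\liminf_{n\to\infty}\frac1n\#\{1\le i\le n: d(f_1^{p_i}(x),f_1^{p_i}(y))<t\}$ and $\Phi^*(f_{1,\infty},x,y,t,p_k)=\limsup_{n\to\infty}\frac1n\#\{1\le i\le n: d(f_1^{p_i}(x),f_1^{p_i}(y))<t\}$. The system is uniformly distributively chaotic in the sequence $(p_k)$ if there exist an uncountable $S\subseteq X$ and $\varepsilon>0$ such that for all distinct $x,y\in S$: $\Phi(f_{1,\infty},x,y,\varepsilon,p_k)=0$ and $\Phi^*(f_{1,\infty},x,y,t,p_k)=1$ for all $t>0$. *)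

From Stdlib Require Import Reals List.
From Coquelicot Require Import Coquelicot.
Open Scope R_scope.

Definition is_metric {X : Type} (d : X -> X -> R) : Prop :=
  (forall x y, 0 <= d x y) /\
  (forall x y, d x y = 0 <-> x = y) /\
  (forall x y, d x y = d y x) /\
  (forall x y z, d x z <= d x y + d y z).

Definition d_open {X : Type} (d : X -> X -> R) (U : X -> Prop) : Prop :=
  forall x, U x -> exists r, 0 < r /\ forall y, d x y < r -> U y.

Definition d_compact {X : Type} (d : X -> X -> R) (K : X -> Prop) : Prop :=
  forall (I : Type) (U : I -> X -> Prop),
    (forall i, d_open d (U i)) ->
    (forall x, K x -> exists i, U i x) ->
    exists l : list I, forall x, K x -> exists i, In i l /\ U i x.

Definition d_continuous {X : Type} (d : X -> X -> R) (g : X -> X) : Prop :=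
  forall x eps, 0 < eps -> exists delta, 0 < delta /\
    forall y, d x y < delta -> d (g x) (g y) < eps.

(* f_1^n = f_n o ... o f_1 ; f_1^0 = id.  Only f 1, f 2, ... are used. *)
Fixpoint comp_seq {X : Type} (f : nat -> X -> X) (n : nat) (x : X) : X :=
  match n with
  | O => x
  | S m => f (S m) (comp_seq f m x)
  end.

Fixpoint close_count {X : Type} (d : X -> X -> R) (f : nat -> X -> X)
    (p : nat -> nat) (x y : X) (t : R) (n : nat) : R :=
  match n with
  | O => 0
  | S m => close_count d f p x y t m +
      (if Rlt_dec (d (comp_seq f (p (S m)) x) (comp_seq f (p (S m)) y)) t
       then 1 else 0)
  end.

(* the sequence n |-> (1/n) #{...}, indexed so that term k is the frequency at n = k+1 *)
Definition close_freq {X : Type} (d : X -> X -> R) (f : nat -> X -> X)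
    (p : nat -> nat) (x y : X) (t : R) (k : nat) : R :=
  close_count d f p x y t (S k) / INR (S k).

Definition Phi {X : Type} (d : X -> X -> R) (f : nat -> X -> X)
    (x y : X) (t : R) (p : nat -> nat) : Rbar :=
  LimInf_seq (close_freq d f p x y t).

Definition Phi_star {X : Type} (d : X -> X -> R) (f : nat -> X -> X)
    (x y : X) (t : R) (p : nat -> nat) : Rbar :=
  LimSup_seq (close_freq d f p x y t).

Definition uncountable {X : Type} (S : X -> Prop) : Prop :=
  ~ exists g : X -> nat, forall x y, S x -> S y -> g x = g y -> x = y.

Definition unif_distr_chaotic {X : Type} (d : X -> X -> R) (f : nat -> X -> X)
    (p : nat -> nat) : Prop :=
  exists (S : X -> Prop) (eps : R), uncountable S /\ 0 < eps /\
    forall x y, S x -> S y -> x <> y ->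
      Phi d f x y eps p = Finite 0 /\
      forall t, 0 < t -> Phi_star d f x y t p = Finite 1.

From Stdlib Require Import Reals List Lia Lra.
From Stdlib Require Import Classical ClassicalEpsilon FunctionalExtensionality.
From Coquelicot Require Import Coquelicot.
Open Scope R_scope.

(* Every s : nat -> bool is coded into a choice sequence that is constant on each block
   [L, L^2) with L = 2^2^j: the block is an A-block when the dyadic offset j - 2^(log2 j)
   is 0, and copies the bit s m when it is m + 1.  Hence every bit of s is copied on
   infinitely many blocks, and infinitely many blocks are A-blocks for every s.  Since L is
   negligible against L^2, at the end of a block the frequency of close times is at most
   1/(L+1) if the two codes disagree on the block (the orbits are then near a and near b
   respectively, hence d(a,b)/3 apart), and at least 1 - 1/(L+1) on an A-block (both orbits
   are near a).  Distinct s give distinct points, so the coded points form an uncountable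
   scrambled set. *)

Definition tower (j : nat) : nat := 2 ^ 2 ^ j.

Lemma tower_S (j : nat) : tower (S j) = (tower j * tower j)%nat.
Proof. unfold tower. rewrite <- Nat.pow_add_r. f_equal. simpl. lia. Qed.

Lemma tower_gt (j : nat) : (j < tower j)%nat.
Proof.
  pose proof (Nat.pow_gt_lin_r 2 j ltac:(lia)).
  pose proof (Nat.pow_gt_lin_r 2 (2 ^ j) ltac:(lia)).
  unfold tower. lia.
Qed.

Definition tower_index (k : nat) : nat := Nat.log2 (Nat.log2 k).

Lemma tower_index_block (j k : nat) :
  (tower j <= k < tower j * tower j)%nat -> tower_index k = j.
Proof.
  rewrite <- tower_S. unfold tower, tower_index. intros [Hlo Hhi].
  assert (Hk : (0 < k)%nat) by (pose proof (Nat.pow_nonzero 2 (2 ^ j)); lia).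
  apply Nat.log2_unique; [lia|]. split.
  - apply Nat.log2_le_mono in Hlo. now rewrite Nat.log2_pow2 in Hlo by lia.
  - exact (proj1 (Nat.log2_lt_pow2 k _ Hk) Hhi).
Qed.

Definition dyadic_offset (q : nat) : nat := q - 2 ^ Nat.log2 q.

Lemma dyadic_offset_frequently (o big : nat) :
  exists q, (big <= q)%nat /\ dyadic_offset q = o.
Proof.
  pose proof (Nat.pow_gt_lin_r 2 (big + o) ltac:(lia)).
  exists (2 ^ (big + o) + o)%nat. split; [lia|].
  unfold dyadic_offset. rewrite (Nat.log2_unique' _ (big + o) o); lia.
Qed.

Definition block_code (s : nat -> bool) (k : nat) : bool :=
  match dyadic_offset (tower_index k) with O => true | S m => s m end.

Lemma block_code_on_block (s : nat -> bool) (j k : nat) :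
  (tower j <= k < tower j * tower j)%nat ->
  block_code s k = match dyadic_offset j with O => true | S m => s m end.
Proof. intros Hk. unfold block_code. now rewrite (tower_index_block j k Hk). Qed.

Lemma block_code_true_blocks (big : nat) : exists L, (big < L)%nat /\
  forall s k, (L <= k < L * L)%nat -> block_code s k = true.
Proof.
  destruct (dyadic_offset_frequently 0 big) as [j [Hj Hoff]].
  exists (tower j). split; [pose proof (tower_gt j); lia|].
  intros s k Hk. now rewrite (block_code_on_block s j k Hk), Hoff.
Qed.

Lemma block_code_disagree_blocks (s s' : nat -> bool) (m : nat) :
  s m <> s' m -> forall big, exists L, (big < L)%nat /\
  forall k, (L <= k < L * L)%nat -> block_code s k <> block_code s' k.
Proof.
  intros Hm big. destruct (dyadic_offset_frequently (S m) big) as [j [Hj Hoff]].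
  exists (tower j). split; [pose proof (tower_gt j); lia|].
  intros k Hk. now rewrite !(block_code_on_block _ j k Hk), Hoff.
Qed.

Lemma bool_seq_no_injection_into_nat (g : (nat -> bool) -> nat) :
  ~ (forall s s', g s = g s' -> s = s').
Proof.
  intros Hg.
  pose (diag n := if excluded_middle_informative (exists s, g s = n /\ s n = false)
                  then true else false).
  assert (Hdiag : diag (g diag) = true <-> exists s, g s = g diag /\ s (g diag) = false).
  { unfold diag at 1. destruct excluded_middle_informative; intuition congruence. }
  destruct (diag (g diag)) eqn:E.
  - destruct (proj1 Hdiag eq_refl) as [s [Hs Hsn]]. apply Hg in Hs. congruence.
  - apply Bool.diff_false_true, Hdiag. eauto.
Qed.

Lemma uncountable_range_of_injective {X : Type} (h : (nat -> bool) -> X) :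
  (forall s s', h s = h s' -> s = s') -> uncountable (fun x => exists s, x = h s).
Proof.
  intros Hh [g Hg]. apply (bool_seq_no_injection_into_nat (fun s => g (h s))).
  intros s s' E. apply Hh, Hg; eauto.
Qed.

Lemma bool_seq_neq_exists (s s' : nat -> bool) : s <> s' -> exists m, s m <> s' m.
Proof.
  intros Hne. apply not_all_ex_not. intros Hall. now apply Hne, functional_extensionality.
Qed.

Lemma le_list_max (l : list nat) (i : nat) : In i l -> (i <= list_max l)%nat.
Proof.
  intros Hi. apply (proj1 (Forall_forall _ l) (proj1 (list_max_le l _) (le_n _)) i Hi).
Qed.

Lemma nested_sets_le {X : Type} (A : nat -> X -> Prop) :
  (forall i x, A (S i) x -> A i x) -> forall i j x, (i <= j)%nat -> A j x -> A i x.
Proof. intros Hdec i j x Hij. induction Hij; auto. Qed.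

Section Metric.

Variables (X : Type) (d : X -> X -> R).
Hypothesis Hd : is_metric d.

Lemma dist_self (x : X) : d x x = 0.
Proof. now apply Hd. Qed.

Lemma dist_sym (x y : X) : d x y = d y x.
Proof. apply Hd. Qed.

Lemma dist_triangle (x y z : X) : d x z <= d x y + d y z.
Proof. apply Hd. Qed.

Lemma dist_pos_of_neq (x y : X) : x <> y -> 0 < d x y.
Proof.
  intros Hxy. destruct Hd as [Hnonneg [Hzero _]].
  destruct (Hnonneg x y) as [Hlt|Heq]; [exact Hlt|].
  now apply eq_sym, Hzero in Heq.
Qed.

Lemma compact_complement_open (K : X -> Prop) (x : X) :
  d_compact d K -> ~ K x -> exists r, 0 < r /\ forall y, d x y < r -> ~ K y.
Proof.
  intros HK Hx.
  destruct (HK nat (fun n y => / INR (S n) < d x y)) as [l Hl].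
  - intros n y Hy. exists (d x y - / INR (S n)). split; [lra|].
    intros z Hz. pose proof (dist_triangle x z y). pose proof (dist_sym y z). lra.
  - intros y Hy. assert (Hpos : 0 < d x y) by (apply dist_pos_of_neq; congruence).
    destruct (archimed_cor1 _ Hpos) as [N [HN HN0]].
    exists (pred N). now rewrite Nat.succ_pred_pos.
  - exists (/ INR (S (list_max l))). split; [apply Rinv_0_lt_compat, lt_0_INR; lia|].
    intros y Hy Ky. destruct (Hl y Ky) as [i [Hi Hiy]].
    assert (/ INR (S (list_max l)) <= / INR (S i)).
    { apply Rinv_le_contravar; [apply lt_0_INR; lia|].
      apply le_INR. pose proof (le_list_max l i Hi). lia. }
    lra.
Qed.

Lemma nested_compacts_shrink (A : nat -> X -> Prop) (a : X) :
  (forall i, d_compact d (A i)) ->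
  (forall i x, A (S i) x -> A i x) ->
  (forall x, (forall i, A i x) <-> x = a) ->
  forall r, 0 < r -> exists N, forall i x, (N <= i)%nat -> A i x -> d a x < r.
Proof.
  intros HA Hdec Hcap r Hr.
  destruct (HA 0%nat nat (fun i y => d a y < r \/ ~ A i y)) as [l Hl].
  - intros i y [Hy|Hy].
    + exists (r - d a y). split; [lra|].
      intros z Hz. left. pose proof (dist_triangle a y z). lra.
    + destruct (compact_complement_open (A i) y (HA i) Hy) as [e [He Hball]].
      exists e. split; [exact He|]. intros z Hz. right. now apply Hball.
  - intros y _. destruct (classic (forall i, A i y)) as [Hall|Hnot].
    + exists 0%nat. left. apply Hcap in Hall. subst. now rewrite dist_self.
    + apply not_all_ex_not in Hnot as [i Hi]. exists i. now right.
  - exists (list_max l). intros i x Hi Hx.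
    destruct (Hl x (nested_sets_le A Hdec 0 i x ltac:(lia) Hx)) as [j [Hj [Hax|Hnx]]];
      [exact Hax|].
    exfalso. apply Hnx, (nested_sets_le A Hdec j i); [|exact Hx].
    pose proof (le_list_max l j Hj). lia.
Qed.

Lemma not_dist_lt_third (a b x y : X) :
  d a x < d a b / 3 -> d b y < d a b / 3 -> ~ d x y < d a b / 3.
Proof.
  intros Hx Hy Hxy.
  pose proof (dist_triangle a x b). pose proof (dist_triangle x y b).
  pose proof (dist_sym y b). lra.
Qed.

Lemma dist_lt_via (a x y : X) (t : R) : d a x < t / 2 -> d a y < t / 2 -> d x y < t.
Proof. intros Hx Hy. pose proof (dist_triangle x a y). pose proof (dist_sym x a). lra. Qed.

End Metric.

Section Close_frequencies.

Variables (X : Type) (d : X -> X -> R) (f : nat -> X -> X) (p : nat -> nat) (x y : X) (t : R).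

Local Notation near i := (d (comp_seq f (p i) x) (comp_seq f (p i) y) < t).
Local Notation count := (close_count d f p x y t).
Local Notation freq := (close_freq d f p x y t).

Lemma close_count_bounds (n : nat) : 0 <= count n <= INR n.
Proof.
  induction n as [|n IH]; simpl close_count; [simpl; lra|].
  rewrite S_INR. destruct Rlt_dec; lra.
Qed.

Lemma close_freq_bounds (k : nat) : 0 <= freq k <= 1.
Proof.
  unfold close_freq. pose proof (close_count_bounds (S k)).
  assert (0 < INR (S k)) by (apply lt_0_INR; lia).
  split.
  - apply Rdiv_le_0_compat; lra.
  - apply Rmult_le_reg_r with (INR (S k)); [lra|].
    unfold Rdiv. rewrite Rmult_assoc, Rinv_l, Rmult_1_r by lra. lra.
Qed.

Lemma close_count_far_run (M n : nat) : (M <= n)%nat ->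
  (forall i, (M < i <= n)%nat -> ~ near i) -> count n = count M.
Proof.
  induction n as [|n IH]; intros HM Hfar; [now replace M with 0%nat by lia|].
  destruct (Nat.eq_dec M (S n)) as [->|HMn]; [reflexivity|].
  simpl close_count. rewrite IH by (lia || (intros i Hi; apply Hfar; lia)).
  destruct Rlt_dec as [Hnear|]; [exfalso; apply (Hfar (S n)); [lia|exact Hnear]|lra].
Qed.

Lemma close_count_near_run (M n : nat) : (M <= n)%nat ->
  (forall i, (M < i <= n)%nat -> near i) -> count n = count M + INR (n - M).
Proof.
  induction n as [|n IH]; intros HM Hnear.
  - replace M with 0%nat by lia. simpl. lra.
  - destruct (Nat.eq_dec M (S n)) as [->|HMn]; [rewrite Nat.sub_diag; simpl; lra|].
    simpl close_count. rewrite IH by (lia || (intros i Hi; apply Hnear; lia)).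
    rewrite Nat.sub_succ_l, S_INR by lia.
    destruct Rlt_dec as [|Hfar]; [lra|exfalso; apply Hfar, Hnear; lia].
Qed.

(* Term [L * L - 2] is the frequency up to time L^2 - 1, in which the first L - 1 times
   weigh (L - 1)/(L^2 - 1) = 1/(L + 1). *)
Lemma close_freq_far_block (L : nat) : (2 <= L)%nat ->
  (forall i, (L <= i < L * L)%nat -> ~ near i) -> freq (L * L - 2) <= / INR (S L).
Proof.
  intros HL Hfar. unfold close_freq.
  replace (S (L * L - 2)) with (L * L - 1)%nat by nia.
  rewrite (close_count_far_run (L - 1)) by (nia || (intros i Hi; apply Hfar; lia)).
  pose proof (close_count_bounds (L - 1)) as Hc.
  assert (Hl : 2 <= INR L) by (apply (le_INR 2) in HL; simpl in HL; lra).
  rewrite !minus_INR, !mult_INR in * by nia.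
  rewrite (S_INR L). change (INR 1) with 1 in *.
  apply Rle_trans with ((INR L - 1) * / (INR L * INR L - 1)).
  - apply Rmult_le_compat_r; [apply Rlt_le, Rinv_0_lt_compat; nra | lra].
  - right. field. split; nra.
Qed.

Lemma close_freq_near_block (L : nat) : (2 <= L)%nat ->
  (forall i, (L <= i < L * L)%nat -> near i) -> 1 - / INR (S L) <= freq (L * L - 2).
Proof.
  intros HL Hnear. unfold close_freq.
  replace (S (L * L - 2)) with (L * L - 1)%nat by nia.
  rewrite (close_count_near_run (L - 1)) by (nia || (intros i Hi; apply Hnear; lia)).
  pose proof (close_count_bounds (L - 1)) as Hc.
  assert (Hl : 2 <= INR L) by (apply (le_INR 2) in HL; simpl in HL; lra).
  replace (L * L - 1 - (L - 1))%nat with (L * L - L)%nat by nia.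
  rewrite !minus_INR, !mult_INR in * by nia.
  rewrite (S_INR L). change (INR 1) with 1 in *.
  apply Rle_trans with ((INR L * INR L - INR L) * / (INR L * INR L - 1)).
  - right. field. split; nra.
  - apply Rmult_le_compat_r; [apply Rlt_le, Rinv_0_lt_compat; nra | lra].
Qed.

End Close_frequencies.

Lemma inv_INR_S_eventually_lt (e : R) : 0 < e ->
  exists L0, forall L, (L0 <= L)%nat -> / INR (S L) < e.
Proof.
  intros He. destruct (archimed_cor1 e He) as [L0 [HL0 HL0pos]].
  exists L0. intros L HL. eapply Rle_lt_trans; [|exact HL0].
  apply Rinv_le_contravar; [apply lt_0_INR; lia | apply le_INR; lia].
Qed.

Lemma LimInf_seq_eq_0_of_blocks (u : nat -> R) :
  (forall n, 0 <= u n) ->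
  (forall big, exists L, (big < L)%nat /\ u (L * L - 2)%nat <= / INR (S L)) ->
  LimInf_seq u = Finite 0.
Proof.
  intros Hnonneg Hblocks. apply is_LimInf_seq_unique. intros e. split.
  - intros N. destruct (inv_INR_S_eventually_lt e (cond_pos e)) as [L0 HL0].
    destruct (Hblocks (N + L0)%nat) as [L [HL Hu]].
    exists (L * L - 2)%nat. split; [nia|].
    specialize (HL0 L ltac:(lia)). lra.
  - exists 0%nat. intros n _. specialize (Hnonneg n). pose proof (cond_pos e). lra.
Qed.

Lemma LimSup_seq_eq_1_of_blocks (u : nat -> R) :
  (forall n, u n <= 1) ->
  (forall big, exists L, (big < L)%nat /\ 1 - / INR (S L) <= u (L * L - 2)%nat) ->
  LimSup_seq u = Finite 1.
Proof.
  intros Hle1 Hblocks. apply is_LimSup_seq_unique. intros e. split.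
  - intros N. destruct (inv_INR_S_eventually_lt e (cond_pos e)) as [L0 HL0].
    destruct (Hblocks (N + L0)%nat) as [L [HL Hu]].
    exists (L * L - 2)%nat. split; [nia|].
    specialize (HL0 L ltac:(lia)). lra.
  - exists 0%nat. intros n _. specialize (Hle1 n). pose proof (cond_pos e). lra.
Qed.

Section Coded_points.

Variables (X : Type) (d : X -> X -> R) (f : nat -> X -> X) (p : nat -> nat)
  (A B : nat -> X -> Prop) (a b : X).
Hypothesis Hd : is_metric d.
Hypotheses (HA : forall i, d_compact d (A i)) (HB : forall i, d_compact d (B i)).
Hypotheses (HdecA : forall i x, A (S i) x -> A i x) (HdecB : forall i x, B (S i) x -> B i x).
Hypotheses (HcapA : forall x, (forall i, A i x) <-> x = a)
  (HcapB : forall x, (forall i, B i x) <-> x = b).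
Hypothesis Hab : a <> b.

Variable point : (nat -> bool) -> X.
Hypothesis point_spec : forall (c : nat -> bool) (k : nat), (1 <= k)%nat ->
  (if c k then A k else B k) (comp_seq f (p k) (point c)).

Local Notation orbit c k := (comp_seq f (p k) (point c)).

Lemma separation_pos : 0 < d a b / 3.
Proof. pose proof (dist_pos_of_neq X d Hd a b Hab). lra. Qed.

Lemma orbits_apart_where_codes_differ : exists N, forall c c' k,
  (1 <= k)%nat -> (N <= k)%nat -> c k <> c' k -> ~ d (orbit c k) (orbit c' k) < d a b / 3.
Proof.
  destruct (nested_compacts_shrink X d Hd A a HA HdecA HcapA _ separation_pos) as [NA HNA].
  destruct (nested_compacts_shrink X d Hd B b HB HdecB HcapB _ separation_pos) as [NB HNB].
  exists (NA + NB)%nat. intros c c' k Hk HN Hne.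
  pose proof (point_spec c k Hk) as Hc. pose proof (point_spec c' k Hk) as Hc'.
  destruct (c k), (c' k); try congruence.
  - apply (not_dist_lt_third X d Hd); [apply (HNA k) | apply (HNB k)]; auto; lia.
  - rewrite dist_sym by exact Hd.
    apply (not_dist_lt_third X d Hd); [apply (HNA k) | apply (HNB k)]; auto; lia.
Qed.

Lemma orbits_close_where_codes_true (t : R) : 0 < t -> exists N, forall c c' k,
  (1 <= k)%nat -> (N <= k)%nat -> c k = true -> c' k = true -> d (orbit c k) (orbit c' k) < t.
Proof.
  intros Ht. destruct (nested_compacts_shrink X d Hd A a HA HdecA HcapA (t / 2)) as [N HN];
    [lra|].
  exists N. intros c c' k Hk HNk Hc Hc'.
  pose proof (point_spec c k Hk) as Px. pose proof (point_spec c' k Hk) as Py.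
  rewrite Hc in Px. rewrite Hc' in Py.
  apply (dist_lt_via X d Hd a); apply (HN k); auto.
Qed.

Lemma Phi_coded_points (s s' : nat -> bool) (m : nat) : s m <> s' m ->
  Phi d f (point (block_code s)) (point (block_code s')) (d a b / 3) p = Finite 0.
Proof.
  intros Hm. destruct orbits_apart_where_codes_differ as [N HN].
  apply LimInf_seq_eq_0_of_blocks; [intros n; apply close_freq_bounds|].
  intros big. destruct (block_code_disagree_blocks s s' m Hm (big + N + 1)) as [L [HL Hdiff]].
  exists L. split; [lia|]. apply close_freq_far_block; [lia|].
  intros i Hi. apply HN; [lia | lia | now apply Hdiff].
Qed.

Lemma Phi_star_coded_points (s s' : nat -> bool) (t : R) : 0 < t ->
  Phi_star d f (point (block_code s)) (point (block_code s')) t p = Finite 1.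
Proof.
  intros Ht. destruct (orbits_close_where_codes_true t Ht) as [N HN].
  apply LimSup_seq_eq_1_of_blocks; [intros n; apply close_freq_bounds|].
  intros big. destruct (block_code_true_blocks (big + N + 1)) as [L [HL Htrue]].
  exists L. split; [lia|]. apply close_freq_near_block; [lia|].
  intros i Hi. apply HN; [lia | lia | apply Htrue; lia ..].
Qed.

Lemma coded_points_injective (s s' : nat -> bool) :
  point (block_code s) = point (block_code s') -> s = s'.
Proof.
  intros E. apply NNPP. intros Hne.
  destruct (bool_seq_neq_exists s s' Hne) as [m Hm].
  destruct orbits_apart_where_codes_differ as [N HN].
  destruct (block_code_disagree_blocks s s' m Hm (N + 1)) as [L [HL Hdiff]].
  apply (HN (block_code s) (block_code s') L); [lia | lia | apply Hdiff; nia |].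
  rewrite E, dist_self by exact Hd. exact separation_pos.
Qed.

Lemma unif_distr_chaotic_of_coded_points : unif_distr_chaotic d f p.
Proof.
  exists (fun x => exists s, x = point (block_code s)), (d a b / 3).
  split; [|split; [exact separation_pos|]].
  - apply uncountable_range_of_injective, coded_points_injective.
  - intros x y [s ->] [s' ->] Hxy.
    destruct (bool_seq_neq_exists s s') as [m Hm]; [congruence|].
    split; [exact (Phi_coded_points s s' m Hm)|].
    intros t Ht. exact (Phi_star_coded_points s s' t Ht).
Qed.

End Coded_points.

Theorem mainTheorem5 (X : Type) (d : X -> X -> R)
    (f : nat -> X -> X) (p : nat -> nat)
    (A B : nat -> X -> Prop) (a b : X) :
  is_metric d ->
  d_compact d (fun _ => True) ->
  (forall n, (1 <= n)%nat -> d_continuous d (f n)) ->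
  (forall k, (1 <= k)%nat -> (0 < p k)%nat) ->
  (forall i, d_compact d (A i)) ->
  (forall i, d_compact d (B i)) ->
  (forall i x, A (S i) x -> A i x) ->
  (forall i x, B (S i) x -> B i x) ->
  (forall x, (forall i, A i x) <-> x = a) ->
  (forall x, (forall i, B i x) <-> x = b) ->
  a <> b ->
  (forall c : nat -> bool, exists xc : X,
      forall k, (1 <= k)%nat ->
        (if c k then A k else B k) (comp_seq f (p k) xc)) ->
  unif_distr_chaotic d f p.
Proof.
  intros Hd _ _ _ HA HB HdecA HdecB HcapA HcapB Hab Hcode.
  destruct (choice _ Hcode) as [point Hpoint].
  exact (unif_distr_chaotic_of_coded_points X d f p A B a b
           Hd HA HB HdecA HdecB HcapA HcapB Hab point Hpoint).
Qed.
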